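(* Let $\Omega\subset\mathbb{R}^N$ be a bounded open set, $T>0$, $Q_T=(0,T)\times\Omega$, $p>1$, $\sigma\ge1$. Let $w\in L^p(0,T;W^{1,p}_0(\Omega))\cap C([0,T];L^\sigma(\Omega))$ with $\|w(0)\|_{L^\sigma(\Omega)}=0$, and suppose there are constants $c_0>0$, $\eta>0$, $m\ge p$ such that for every $0\le t\le T$, $$\sup_{s\in(0,t)}\|w(s)\|_{L^\sigma(\Omega)}^\sigma+\|w\|_{L^p(0,t;W^{1,p}_0(\Omega))}^p\le c_0\sup_{s\in(0,t)}\|w(s)\|_{L^\sigma(\Omega)}^\eta\,\|w\|_{L^p(0,t;W^{1,p}_0(\Omega))}^m.$$ Then $w\equiv0$ in $Q_T$. *)

From HB Require Import structures.
From mathcomp Require Import all_boot all_order all_algebra.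
From mathcomp Require Import all_classical all_reals all_analysis.
Set Implicit Arguments. Unset Strict Implicit. Unset Printing Implicit Defensive.
Import Order.TTheory GRing.Theory Num.Theory.
Import numFieldNormedType.Exports.
Local Open Scope classical_set_scope.
Local Open Scope ring_scope.

Section Defs.
Variable R : realType.

Fixpoint iint (n : nat) (f : seq R -> \bar R) : \bar R :=
  match n with
  | 0 => f [::]
  | n'.+1 => (\int[@lebesgue_measure R]_x iint n' (fun s => f (x :: s)))%E
  end.

(* integral over R^N w.r.t. N-dimensional Lebesgue measure of a
   nonnegative (extended real valued) function *)
Definition intRN (N : nat) (f : 'rV[R]_N -> \bar R) : \bar R :=
  iint N (fun s => f (\row_i nth 0 s i)).

Definition sintRN (N : nat) (f : 'rV[R]_N -> R) : \bar R :=
  (intRN (fun x => (Num.max (f x) 0)%:E) - intRN (fun x => (Num.max (- f x) 0)%:E))%E.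

Definition BRN (N : nat) := g_sigma_algebraType (@open 'rV[R]_N).

Definition enorm (N : nat) (v : 'rV[R]_N) : R := Num.sqrt (\sum_i v 0 i ^+ 2).

Definition powint (N : nat) (q : R) (O : set 'rV[R]_N) (u : 'rV[R]_N -> R) : \bar R :=
  intRN (fun x => (\1_O x * `|u x| `^ q)%:E).

Definition inL (N : nat) (q : R) (O : set 'rV[R]_N) (u : 'rV[R]_N -> R) : Prop :=
  measurable_fun (O : set (BRN N)) (u : BRN N -> R) /\ (powint q O u < +oo)%E.

Definition Lnorm_O (N : nat) (q : R) (O : set 'rV[R]_N) (u : 'rV[R]_N -> R) : R :=
  fine (powint q O u) `^ q^-1.

Definition pd (N : nat) (i : 'I_N) (f : 'rV[R]_N -> R) : 'rV[R]_N -> R :=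
  fun x => 'D_(delta_mx 0 i) f x.

Fixpoint pds (N : nat) (l : seq 'I_N) (f : 'rV[R]_N -> R) : 'rV[R]_N -> R :=
  match l with [::] => f | i :: l' => pd i (pds l' f) end.

Definition smooth (N : nat) (f : 'rV[R]_N -> R) : Prop :=
  forall l : seq 'I_N, continuous (pds l f) /\
    forall (i : 'I_N) (x : 'rV[R]_N), derivable (pds l f) x (delta_mx 0 i).

Definition testfun (N : nat) (O : set 'rV[R]_N) (phi : 'rV[R]_N -> R) : Prop :=
  smooth phi /\ exists K : set 'rV[R]_N,
    compact K /\ K `<=` O /\ forall x, ~ K x -> phi x = 0.

Definition grad (N : nat) (phi : 'rV[R]_N -> R) : 'rV[R]_N -> 'rV[R]_N :=
  fun x => \row_i pd i phi x.

Definition weak_grad (N : nat) (O : set 'rV[R]_N) (u : 'rV[R]_N -> R)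
    (g : 'rV[R]_N -> 'rV[R]_N) : Prop :=
  forall phi, testfun O phi -> forall i : 'I_N,
    sintRN (fun x => \1_O x * (u x * pd i phi x)) =
    (- sintRN (fun x => \1_O x * (g x 0 i * phi x))%R)%E.

(* u \in W^{1,p}_0(O) with weak gradient g: u in W^{1,p}(O) and u is the
   W^{1,p}-limit of functions of C_c^infty(O) *)
Definition inW10 (N : nat) (p : R) (O : set 'rV[R]_N) (u : 'rV[R]_N -> R)
    (g : 'rV[R]_N -> 'rV[R]_N) : Prop :=
  [/\ inL p O u,
      (forall i, measurable_fun (O : set (BRN N)) ((fun x => g x 0 i) : BRN N -> R)),
      (powint p O (fun x => enorm (g x)) < +oo)%E,
      weak_grad O u g &
      (exists phik : nat -> 'rV[R]_N -> R, (forall k, testfun O (phik k)) /\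
        (fun k => Lnorm_O p O (fun x => phik k x - u x) +
                  Lnorm_O p O (fun x => enorm (grad (phik k) x - g x))) @ \oo --> 0)].

(* int_O |g|^p dx  (p-th power of the W^{1,p}_0 norm ||grad u||_{L^p}) *)
Definition gradpow (N : nat) (p : R) (O : set 'rV[R]_N) (g : 'rV[R]_N -> 'rV[R]_N) : \bar R :=
  powint p O (fun x => enorm (g x)).

(* w \in L^p(0,T; W^{1,p}_0(O)), with (spatial) weak gradient G *)
Definition inLpW10 (N : nat) (O : set 'rV[R]_N) (T p : R)
    (w : R -> 'rV[R]_N -> R) (G : R -> 'rV[R]_N -> 'rV[R]_N) : Prop :=
  [/\ measurable_fun ([set z | 0 < z.1 < T /\ O z.2] : set (R * BRN N)%type)
        ((fun z => w z.1 z.2) : (R * BRN N)%type -> R),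
      (forall i, measurable_fun ([set z | 0 < z.1 < T /\ O z.2] : set (R * BRN N)%type)
        ((fun z => G z.1 z.2 0 i) : (R * BRN N)%type -> R)),
      {ae @lebesgue_measure R, forall s, 0 < s < T -> inW10 p O (w s) (G s)} &
      (\int[@lebesgue_measure R]_(s in [set s : R | (0 < s < T)%R]) gradpow p O (G s) < +oo)%E].

Definition normLpW (N : nat) (O : set 'rV[R]_N) (p : R)
    (G : R -> 'rV[R]_N -> 'rV[R]_N) (t : R) : R :=
  fine (\int[@lebesgue_measure R]_(s in [set s : R | (0 < s < t)%R]) gradpow p O (G s))%E `^ p^-1.

Definition inCL (N : nat) (O : set 'rV[R]_N) (T sigma : R) (w : R -> 'rV[R]_N -> R) : Prop :=
  (forall t, 0 <= t <= T -> inL sigma O (w t)) /\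
  (forall t, 0 <= t <= T -> forall e : R, 0 < e -> exists2 d : R, 0 < d &
     forall s, 0 <= s <= T -> `|s - t| < d ->
       Lnorm_O sigma O (fun x => w s x - w t x) < e).

End Defs.

From mathcomp Require Import all_boot all_order all_algebra.
From mathcomp Require Import all_classical all_reals all_analysis.
From mathcomp Require Import measurable_realfun lra.
Import Order.TTheory GRing.Theory Num.Theory.
Import numFieldNormedType.Exports.
Local Open Scope classical_set_scope.
Local Open Scope ring_scope.
Set Implicit Arguments. Unset Strict Implicit. Unset Printing Implicit Defensive.

(* Continuity induction on [0, T] for the property ||w(t)||_sigma = 0.  If w vanishes
   on [0, t0], continuity of w in L^sigma keeps ||w(s)||_sigma below any e > 0 for s
   slightly beyond t0.  For such t the energy inequality reads
   Y + z^p <= c0 e^eta z^m, where Y = sup_(0,t) ||w||^sigma and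
   z = ||w||_(L^p(0,t;W)) <= ||w||_(L^p(0,T;W)) =: Z; once c0 e^eta Z^(m-p) < 1 this
   forces z = 0 and then Y = 0.  Left-closedness of the zero set also follows from
   continuity.  As continuity only controls ||w(s) - w(t)||_sigma, we use the
   quasi-triangle inequality  int |u|^q <= 2^q (int |a|^q + int |v|^q)  when
   |u| <= |a| + |v|; for the iterated integral over R^N this needs its additivity,
   i.e. Borel measurability of the map R x R^n -> R^(n+1), (x, r) |-> (x, r). *)

Section RowCons.
Variable R : realType.

Definition row_cons n (x : R) (r : 'rV[R]_n) : 'rV[R]_n.+1 :=
  \row_i (if unlift ord0 i is Some j then r 0 j else x).

Lemma row_nth_cons n x (l : seq R) :
  \row_(i < n.+1) nth 0 (x :: l) i = row_cons x (\row_(i < n) nth 0 l i).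
Proof. by apply/rowP => i; rewrite !mxE; case: unliftP => [j ->|->] //=; rewrite mxE. Qed.

Lemma ball_row_cons n (c : 'rV[R]_n.+1) e x r :
  ball c e (row_cons x r) <-> ball (c 0 0) e x /\ ball (\row_j c 0 (lift ord0 j)) e r.
Proof.
split => [[e0 H]|[H0 [e0 H]]].
- split; first by have := H 0 0; rewrite mxE unlift_none.
  split => // i j; rewrite mxE (ord1 i).
  by have := H 0 (lift ord0 j); rewrite mxE liftK.
- split => // i j; rewrite mxE (ord1 i); case: unliftP => [k ->|->] //.
  by have := H 0 k; rewrite mxE.
Qed.

Definition grid_ball n (kz : nat * seq int) : set 'rV[R]_n :=
  ball (\row_i ((nth 0 kz.2 i)%:~R / kz.1.+1%:R) : 'rV[R]_n) kz.1.+1%:R^-1.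

Lemma grid_ball_floor n (v : 'rV[R]_n) k :
  grid_ball (k, [seq Num.floor (v 0 i * k.+1%:R) | i <- enum 'I_n]) v.
Proof.
split=> [|i j]; first by rewrite invr_gt0 ltr0Sn.
rewrite (ord1 i) mxE (nth_map j) ?size_enum_ord // nth_ord_enum /ball /=.
set M := k.+1%:R : R; have M0 : 0 < M by rewrite ltr0Sn.
have := floor_le (v 0 j * M); have := floorD1_gt (v 0 j * M).
rewrite intrD -ler_pdivrMr // -ltr_pdivlMr // mulrDl mul1r => ub lb.
by rewrite ler0_norm ?subr_le0 // opprB ltrBlDl.
Qed.

Lemma open_grid_cover n (U : set 'rV[R]_n) : open U ->
  U = \bigcup_kz [set v | grid_ball kz `<=` U /\ grid_ball kz v].
Proof.
move=> oU; apply/seteqP; split => [v Uv|v [kz _ [kzU /kzU //]]].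
have /nbhs_ballP[e e0 He] : nbhs v U by move: oU; rewrite openE => /(_ _ Uv).
have [k ke] : exists k, k.+1%:R^-1 < e / 2 :> R.
  exists (Num.bound (e / 2)^-1).
  rewrite -[X in _ < X]invrK ltf_pV2 ?posrE ?invr_gt0 ?ltr0Sn ?divr_gt0 //.
  apply: lt_le_trans (archi_boundP _) _; first by rewrite invr_ge0 ltW ?divr_gt0.
  by rewrite ler_nat.
have vk := grid_ball_floor v k.
exists (k, [seq Num.floor (v 0 i * k.+1%:R) | i <- enum 'I_n]) => //; split => // y ky.
apply: He; apply: le_ball (ball_triangle (ball_sym vk) ky).
by rewrite (splitr e) lerD // ltW.
Qed.

Lemma preimage_row_cons_ball n (c : 'rV[R]_n.+1) e :
  (fun p : R * 'rV[R]_n => row_cons p.1 p.2) @^-1` ball c e =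
  ball (c 0 0) e `*` ball (\row_j c 0 (lift ord0 j)) e.
Proof. by apply/seteqP; split => p /ball_row_cons. Qed.

(* Open sets of R^(n+1) are countable unions of grid balls, and the preimage of a
   (sup-norm) ball is a measurable rectangle. *)
Lemma measurable_row_cons n :
  measurable_fun setT (fun p : measurableTypeR R * BRN R n => (row_cons p.1 p.2 : BRN R n.+1)).
Proof.
apply: (@measurability _ _ _ (BRN R n.+1) _ _ open) => // _ [U oU <-]; rewrite setTI.
rewrite (open_grid_cover oU) preimage_bigcup.
apply: countable_bigcupT_measurable => [|kz]; first exact: countableP.
have [kzU|kzNU] := pselect (grid_ball kz `<=` U).
  rewrite (_ : [set v | _ /\ _] = grid_ball kz); last by apply/seteqP; split => [v []|v].
  rewrite preimage_row_cons_ball.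
  by apply: measurableX; [exact: measurable_ball | apply: sub_sigma_algebra; exact: ball_open].
by rewrite (_ : [set v | _ /\ _] = set0) ?preimage_set0 //; apply/seteqP; split => // v [].
Qed.

Lemma measurable_row_consr n (x : R) :
  measurable_fun setT (fun r : BRN R n => (row_cons x r : BRN R n.+1)).
Proof. by have := measurable_fun_pair2 x (measurable_row_cons (n:=n)). Qed.

End RowCons.

Section IteratedIntegral.
Variable R : realType.
Local Open Scope ereal_scope.

Lemma ge0_le_integral_subset d (T : measurableType d) (mu : {measure set T -> \bar R})
    (D1 D2 : set T) (f g : T -> \bar R) :
  D1 `<=` D2 -> (forall x, 0 <= f x) -> (forall x, f x <= g x) ->
  \int[mu]_(x in D1) f x <= \int[mu]_(x in D2) g x.
Proof.
move=> D12 f0 fg; have g0 x : 0 <= g x by apply: le_trans (fg x).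
rewrite !ge0_integralE //; apply: ge_ereal_sup => _ [h hf <-].
apply: ereal_sup_ubound; exists h => // x; apply: le_trans (hf x) _.
rewrite /patch; case: ifPn => [/set_mem/D12/mem_set -> //|_]; by case: ifP.
Qed.

Lemma intRN_cons n (f : 'rV[R]_n.+1 -> \bar R) :
  intRN f = \int[lebesgue_measure]_x intRN (fun r => f (row_cons x r)).
Proof.
by apply: eq_integral => x _; congr iint; apply/funext => l; rewrite row_nth_cons.
Qed.

Lemma intRN_ge0 n (f : 'rV[R]_n -> \bar R) : (forall x, 0 <= f x) -> 0 <= intRN f.
Proof.
elim: n f => [|n IH] f f0; first exact: f0.
by rewrite intRN_cons; apply: integral_ge0 => x _; apply: IH.
Qed.

Lemma le_intRN n (f g : 'rV[R]_n -> \bar R) :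
  (forall x, 0 <= f x) -> (forall x, f x <= g x) -> intRN f <= intRN g.
Proof.
elim: n f g => [|n IH] f g f0 fg; first exact: fg.
rewrite !intRN_cons; apply: ge0_le_integral_subset => // x; first exact: intRN_ge0.
exact: IH.
Qed.

Lemma measurable_intRN n d (T : measurableType d) (K : T * BRN R n -> \bar R) :
  measurable_fun setT K -> (forall z, 0 <= K z) ->
  measurable_fun setT (fun t => intRN (fun r => K (t, r))).
Proof.
elim: n d T K => [|n IH] d T K mK K0.
  by apply: measurableT_comp mK _; apply: measurable_fun_pair.
pose K' (q : (T * measurableTypeR R) * BRN R n) := K (q.1.1, row_cons q.1.2 q.2).
have mK' : measurable_fun setT K'.
  have mr : measurable_fun setT (fun q : (T * measurableTypeR R) * BRN R n => (q.1.2, q.2)).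
    exact: measurable_fun_pair (measurableT_comp measurable_snd measurable_fst) measurable_snd.
  have mh : measurable_fun setT (fun q : (T * measurableTypeR R) * BRN R n =>
      (q.1.1, (row_cons q.1.2 q.2 : BRN R n.+1))).
    apply: measurable_fun_pair; first exact: measurableT_comp measurable_fst measurable_fst.
    by have := measurableT_comp (measurable_row_cons (n:=n)) mr.
  exact: measurableT_comp mK mh.
rewrite (_ : (fun t => _) =
    fubini_F lebesgue_measure (fun tx => intRN (fun r => K' (tx, r)))).
  exact: measurable_fun_fubini_tonelli_F (IH _ _ _ mK' (fun=> K0 _))
    (fun=> intRN_ge0 (fun=> K0 _)).
by apply/funext => t; rewrite intRN_cons.
Qed.

Lemma intRND n (f g : BRN R n -> \bar R) :
  measurable_fun setT f -> measurable_fun setT g ->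
  (forall x, 0 <= f x) -> (forall x, 0 <= g x) ->
  intRN (fun x => f x + g x) = intRN f + intRN g.
Proof.
elim: n f g => [|n IH] f g mf mg f0 g0 //.
have mfr := measurableT_comp mf (measurable_row_cons (n:=n)).
have mgr := measurableT_comp mg (measurable_row_cons (n:=n)).
rewrite !intRN_cons -ge0_integralD //; last 4 first.
- by move=> x _; apply: intRN_ge0.
- exact: measurable_intRN mfr (fun=> f0 _).
- by move=> x _; apply: intRN_ge0.
- exact: measurable_intRN mgr (fun=> g0 _).
apply: eq_integral => x _; apply: IH => //;
  exact: measurableT_comp (measurable_row_consr (n:=n) x).
Qed.

Lemma intRNZl n (k : R) (f : BRN R n -> \bar R) : (0 <= k)%R ->
  measurable_fun setT f -> (forall x, 0 <= f x) ->
  intRN (fun x => k%:E * f x) = k%:E * intRN f.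
Proof.
move=> k0; elim: n f => [|n IH] f mf f0 //.
rewrite !intRN_cons -ge0_integralZl_EFin //; last 2 first.
- by move=> x _; apply: intRN_ge0.
- exact: measurable_intRN (measurableT_comp mf (measurable_row_cons (n:=n))) (fun=> f0 _).
apply: eq_integral => x _; apply: IH => //.
exact: measurableT_comp (measurable_row_consr (n:=n) x).
Qed.

End IteratedIntegral.

Lemma powR_le_add2 (R : realType) (q u a v : R) : 0 <= q -> 0 <= a -> 0 <= v ->
  0 <= u <= a + v -> u `^ q <= 2 `^ q * (a `^ q + v `^ q).
Proof.
move=> q0 a0 v0 /andP[u0 uav].
have av0 : 0 <= Num.max a v by rewrite le_max a0.
have uav2 : u <= 2 * Num.max a v.
  by apply: le_trans uav _; rewrite mulr2n mulrDl mul1r lerD // le_max lexx ?orbT.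
apply: le_trans (_ : (2 * Num.max a v) `^ q <= _).
  by apply: ge0_ler_powR; rewrite ?nnegrE ?mulr_ge0.
rewrite powRM //; apply: ler_wpM2l; first exact: powR_ge0.
by case: (leP a v) => _; rewrite ?lerDr ?lerDl powR_ge0.
Qed.

Section PowerIntegral.
Variables (R : realType) (N : nat) (O : set 'rV[R]_N).
Hypothesis oO : open O.
Local Open Scope ereal_scope.

Lemma powint_ge0 (q : R) (u : 'rV[R]_N -> R) : 0 <= powint q O u.
Proof.
by apply: intRN_ge0 => x; rewrite lee_fin mulr_ge0 ?powR_ge0 // indicE; case: (x \in O).
Qed.

Lemma measurable_powint_integrand (q : R) (u : 'rV[R]_N -> R) :
  measurable_fun (O : set (BRN R N)) (u : BRN R N -> R) ->
  measurable_fun (setT : set (BRN R N)) (fun x => (\1_O x * `|u x| `^ q)%:E).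
Proof.
move=> mu; apply/measurable_EFinP.
rewrite (_ : (fun x => _) = (fun x : BRN R N => (`|u x| `^ q)%R) \_ O); last first.
  by apply/funext => x; rewrite /patch indicE; case: (x \in O); rewrite ?mul1r ?mul0r.
have mO : measurable (O : set (BRN R N)) by exact: sub_sigma_algebra.
apply: (measurable_restrictT _ mO).1.
apply: measurableT_comp (measurable_powR q) _.
exact: measurableT_comp (@normr_measurable R setT) mu.
Qed.

Lemma powint_le_add (q : R) (u a v : 'rV[R]_N -> R) : (0 <= q)%R ->
  measurable_fun (O : set (BRN R N)) (a : BRN R N -> R) ->
  measurable_fun (O : set (BRN R N)) (v : BRN R N -> R) ->
  (forall x, `|u x| <= `|a x| + `|v x|)%R ->
  powint q O u <= (2 `^ q)%:E * (powint q O a + powint q O v).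
Proof.
move=> q0 ma mv uav.
have ge0 (f : 'rV[R]_N -> R) x : 0 <= (\1_O x * `|f x| `^ q)%:E.
  by rewrite lee_fin mulr_ge0 ?powR_ge0 // indicE; case: (x \in O).
have mA := measurable_powint_integrand q ma.
have mV := measurable_powint_integrand q mv.
rewrite /powint -intRND // -intRNZl ?powR_ge0 //; last 2 first.
- exact: emeasurable_funD.
- by move=> x; apply: adde_ge0.
apply: le_intRN => // x; rewrite -EFinD -EFinM lee_fin !indicE.
case: (x \in O); last by rewrite !mul0r addr0 mulr0.
by rewrite !mul1r; apply: powR_le_add2; rewrite ?normr_ge0 ?uav.
Qed.

Lemma Lnorm_O_ge0 (q : R) (u : 'rV[R]_N -> R) : (0 <= Lnorm_O q O u)%R.
Proof. exact: powR_ge0. Qed.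

Lemma Lnorm_O_subC (q : R) (f g : 'rV[R]_N -> R) :
  Lnorm_O q O (fun x => f x - g x)%R = Lnorm_O q O (fun x => g x - f x)%R.
Proof. by congr (fine (intRN _) `^ _)%R; apply/funext => x; rewrite distrC. Qed.

Lemma powint_eq0 (q : R) (u : 'rV[R]_N -> R) :
  powint q O u < +oo -> Lnorm_O q O u = 0%R -> powint q O u = 0.
Proof.
move=> ufin /powR_eq0_eq0 u0.
by rewrite -(@fineK _ (powint q O u)) ?u0 // ge0_fin_numE ?powint_ge0.
Qed.

Lemma powint_sub_lty (q : R) (f g : 'rV[R]_N -> R) : (0 <= q)%R ->
  measurable_fun (O : set (BRN R N)) (f : BRN R N -> R) ->
  measurable_fun (O : set (BRN R N)) (g : BRN R N -> R) ->
  powint q O f < +oo -> powint q O g < +oo -> powint q O (fun x => f x - g x)%R < +oo.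
Proof.
move=> q0 mf mg ffin gfin.
apply: le_lt_trans (powint_le_add q0 mf mg (fun x => ler_normB _ _)) _.
have ffn : powint q O f \is a fin_num by rewrite ge0_fin_numE ?powint_ge0.
have gfn : powint q O g \is a fin_num by rewrite ge0_fin_numE ?powint_ge0.
by rewrite -(fineK ffn) -(fineK gfn) -EFinD -EFinM ltry.
Qed.

Lemma Lnorm_O_le_null (q : R) (u a v : 'rV[R]_N -> R) : (0 < q)%R ->
  measurable_fun (O : set (BRN R N)) (a : BRN R N -> R) ->
  measurable_fun (O : set (BRN R N)) (v : BRN R N -> R) ->
  powint q O a < +oo -> powint q O v = 0 ->
  (forall x, `|u x| <= `|a x| + `|v x|)%R ->
  (Lnorm_O q O u <= 2 * Lnorm_O q O a)%R.
Proof.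
move=> q0 ma mv afin v0 uav.
have := powint_le_add (ltW q0) ma mv uav; rewrite v0 adde0 => ua.
have afn : powint q O a \is a fin_num by rewrite ge0_fin_numE ?powint_ge0.
have ufn : powint q O u \is a fin_num.
  rewrite ge0_fin_numE ?powint_ge0 //; apply: le_lt_trans ua _.
  by rewrite -(fineK afn) -EFinM ltry.
have {}ua : (fine (powint q O u) <= 2 `^ q * fine (powint q O a))%R.
  by rewrite -lee_fin EFinM !fineK.
apply: le_trans (_ : ((2 `^ q * fine (powint q O a)) `^ q^-1 <= _)%R).
  by apply: ge0_ler_powR;
    rewrite ?nnegrE ?invr_ge0 ?(ltW q0) ?mulr_ge0 ?powR_ge0 ?fine_ge0 ?powint_ge0.
rewrite powRM ?powR_ge0 ?fine_ge0 ?powint_ge0 // -powRrM mulfV ?gt_eqF // powRr1 //.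
Qed.

End PowerIntegral.

Lemma normLpW_le (R : realType) N (O : set 'rV[R]_N) (p : R)
    (G : R -> 'rV[R]_N -> 'rV[R]_N) (t t' : R) :
  0 <= p -> t <= t' ->
  (\int[lebesgue_measure]_(s in [set s : R | (0 < s < t')%R]) gradpow p O (G s) < +oo)%E ->
  normLpW O p G t <= normLpW O p G t'.
Proof.
move=> p0 tt' fin.
have int_ge0 (D : set R) :
    (0 <= \int[lebesgue_measure]_(s in D) gradpow p O (G s))%E.
  by apply: integral_ge0 => s _; apply: powint_ge0.
have int_le : (\int[lebesgue_measure]_(s in [set s : R | (0 < s < t)%R]) gradpow p O (G s)
    <= \int[lebesgue_measure]_(s in [set s : R | (0 < s < t')%R]) gradpow p O (G s))%E.
  apply: ge0_le_integral_subset => // [s /andP[s0 st]|s]; last exact: powint_ge0.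
  by rewrite /= s0 (lt_le_trans st tt').
apply: ge0_ler_powR; rewrite ?nnegrE ?invr_ge0 ?fine_ge0 //.
by apply: fine_le => //; rewrite ge0_fin_numE //; apply: le_lt_trans fin.
Qed.

Lemma superlinear_bound_eq0 (R : realType) (Y K z Z p m : R) :
  0 < p <= m -> 0 <= Y -> 0 <= K -> 0 <= z <= Z -> K * Z `^ (m - p) < 1 ->
  Y + z `^ p <= K * z `^ m -> z = 0.
Proof.
move=> /andP[p0 pm] Y0 K0 /andP[z0 zZ] KZ ineq.
apply/eqP; rewrite eq_le z0 andbT leNgt; apply/negP => zpos.
have zm : z `^ m = z `^ (m - p) * z `^ p.
  by rewrite -powRD ?subrK //; apply/implyP => _; rewrite gt_eqF.
have : z `^ p <= K * Z `^ (m - p) * z `^ p.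
  rewrite -(lerDr (z `^ p)) in Y0; apply: le_trans Y0 (le_trans ineq _).
  rewrite zm mulrA; apply: ler_wpM2r; first exact: powR_ge0.
  by apply: ler_wpM2l => //; apply: ge0_ler_powR; rewrite ?nnegrE ?subr_ge0 ?(le_trans z0 zZ).
by rewrite -[X in X <= _]mul1r ler_pM2r ?powR_gt0 // leNgt KZ.
Qed.

Lemma real_induction (R : realType) (T : R) (P : R -> Prop) : 0 <= T -> P 0 ->
  (forall t, 0 < t <= T -> (forall s, 0 <= s < t -> P s) -> P t) ->
  (forall t, 0 <= t < T -> (forall s, 0 <= s <= t -> P s) ->
     exists2 t', t < t' & forall s, t < s < t' -> P s) ->
  forall t, 0 <= t <= T -> P t.
Proof.
move=> T0 P0 Pleft Pright.
pose A := [set t | 0 <= t <= T /\ forall s, 0 <= s <= t -> P s].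
have A0 : A 0.
  split=> [|s /andP[s0 s0']]; first by rewrite lexx.
  by have -> : s = 0 by apply/eqP; rewrite eq_le s0' s0.
have AT : ubound A T by move=> t [/andP[]].
have ts0 : 0 <= sup A by apply: ub_le_sup; [exists T | ].
have tsT : sup A <= T by apply: ge_sup; [exists 0 |].
have Pbelow s : 0 <= s < sup A -> P s.
  move=> /andP[s0 sts]; have [y [_ Py] sy] := sup_gt (ex_intro _ 0 A0) sts.
  by apply: Py; rewrite s0 ltW.
have Ats : A (sup A).
  have Pts : P (sup A).
    have [->|ts_neq0] := eqVneq (sup A) 0; first exact: P0.
    by apply: Pleft => //; rewrite lt0r ts_neq0 ts0.
  split=> [|s /andP[s0]]; first by rewrite ts0.
  by rewrite le_eqVlt => /predU1P[->|sts] //; apply: Pbelow; rewrite s0.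
have tsE : sup A = T.
  apply/eqP; rewrite eq_le tsT leNgt; apply/negP => tsT'.
  have tsI : 0 <= sup A < T by rewrite ts0.
  have [t' tst' Pt'] := Pright _ tsI Ats.2.
  have tsm : sup A < Num.min t' T by rewrite lt_min tst'.
  have [tsu ut] := midf_lt tsm.
  have Au : A ((sup A + Num.min t' T) / 2).
    split=> [|s /andP[s0 su]].
      by rewrite (le_trans ts0 (ltW tsu)) (le_trans (ltW ut)) // ge_min lexx orbT.
    have [sts|tss] := leP s (sup A); first by apply: Ats.2; rewrite s0.
    apply: Pt'; rewrite tss (le_lt_trans su) //; apply: lt_le_trans ut _.
    by rewrite ge_min lexx.
  by have := ub_le_sup (ex_intro _ T AT) Au; rewrite leNgt tsu.
by move=> t /andP[t0 tT]; apply: Ats.2; rewrite t0 tsE.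
Qed.

Section EnergyUniqueness.
Variables (R : realType) (N : nat) (O : set 'rV[R]_N) (T p sigma c0 eta m : R).
Variables (w : R -> 'rV[R]_N -> R) (G : R -> 'rV[R]_N -> 'rV[R]_N).
Hypotheses (oO : open O) (sigma_gt0 : 0 < sigma) (wC : inCL O T sigma w).
Hypotheses (p_gt0 : 0 < p) (pm : p <= m) (c0_gt0 : 0 < c0) (eta_gt0 : 0 < eta).
Hypothesis GT :
  (\int[lebesgue_measure]_(s in [set s : R | (0 < s < T)%R]) gradpow p O (G s) < +oo)%E.
Hypothesis energy : forall t, 0 <= t <= T ->
  sup [set Lnorm_O sigma O (w s) `^ sigma | s in [set s | 0 < s < t]]
    + normLpW O p G t `^ p
  <= c0 * sup [set Lnorm_O sigma O (w s) `^ eta | s in [set s | 0 < s < t]]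
       * normLpW O p G t `^ m.

Local Notation L s := (Lnorm_O sigma O (w s)).

Lemma Lnorm_le_diff s t : 0 <= s <= T -> 0 <= t <= T -> L t = 0 ->
  L s <= 2 * Lnorm_O sigma O (fun x => w s x - w t x).
Proof.
move=> sT tT Lt; have [[ms fs] [mt ft]] := (wC.1 s sT, wC.1 t tT).
have mst : measurable_fun (O : set (BRN R N)) ((fun x => w s x - w t x) : BRN R N -> R).
  exact: measurable_funB.
apply: (Lnorm_O_le_null oO sigma_gt0 mst mt (u := w s)).
- exact: powint_sub_lty (ltW sigma_gt0) ms mt fs ft.
- exact: powint_eq0 ft Lt.
- by move=> x; rewrite -{1}(subrK (w t x) (w s x)) ler_normD.
Qed.

Lemma Lnorm_near_zero t : 0 <= t <= T -> L t = 0 -> forall e, 0 < e ->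
  exists2 d, 0 < d & forall s, 0 <= s <= T -> `|s - t| < d -> L s <= e.
Proof.
move=> tT Lt e e0; have [d d0 near_t] := wC.2 t tT (e / 2) (divr_gt0 e0 (ltr0Sn _ 1)).
exists d => // s sT st; apply: le_trans (Lnorm_le_diff sT tT Lt) _.
by rewrite mulrC -ler_pdivlMr ?ltW ?near_t.
Qed.

Lemma Lnorm_left_closed t : 0 < t <= T -> (forall s, 0 <= s < t -> L s = 0) -> L t = 0.
Proof.
move=> /andP[t0 tT] Lbelow; have tT' : 0 <= t <= T by rewrite ltW.
apply/eqP; rewrite eq_le Lnorm_O_ge0 andbT; apply/ler_addgt0Pr => e e0.
have [d d0 near_t] := wC.2 t tT' (e / 2) (divr_gt0 e0 (ltr0Sn _ 1)).
pose s := Num.max 0 (t - d / 2).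
have ts : t - d / 2 <= s by rewrite le_max lexx orbT.
have st : 0 <= s < t by rewrite le_max lexx gt_max t0 ltrBlDr ltrDl divr_gt0.
have sT : 0 <= s <= T by rewrite (andP st).1 (le_trans (ltW (andP st).2)).
have std : `|s - t| < d by rewrite ltr0_norm ?subr_lt0 ?(andP st).2 // opprB; lra.
rewrite add0r; apply: le_trans (Lnorm_le_diff tT' sT (Lbelow s st)) _.
by rewrite Lnorm_O_subC mulrC -ler_pdivlMr ?ltW ?near_t.
Qed.

Lemma energy_vanish t e : 0 < t <= T -> 0 <= e ->
  c0 * e `^ eta * normLpW O p G T `^ (m - p) < 1 ->
  (forall s, 0 < s < t -> L s <= e) -> forall s, 0 < s < t -> L s = 0.
Proof.
move=> /andP[t0 tT] e0 small Le; have tT' : 0 <= t <= T by rewrite ltW.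
set SY := [set L s `^ sigma | s in [set s | 0 < s < t]].
set SB := [set L s `^ eta | s in [set s | 0 < s < t]].
have SYub : ubound SY (e `^ sigma).
  move=> _ [s /Le Ls <-].
  by apply: ge0_ler_powR; rewrite ?nnegrE ?Lnorm_O_ge0 ?(ltW sigma_gt0).
have SBub : ubound SB (e `^ eta).
  move=> _ [s /Le Ls <-].
  by apply: ge0_ler_powR; rewrite ?nnegrE ?Lnorm_O_ge0 ?(ltW eta_gt0).
have SY_ge s : 0 < s < t -> L s `^ sigma <= sup SY.
  by move=> st; apply: ub_le_sup; [exists (e `^ sigma) | exists s].
have [mid0 midt] := midf_lt t0; rewrite add0r in mid0 midt.
have mid_in : 0 < t / 2 < t by rewrite mid0.
have SB_ge : L (t / 2) `^ eta <= sup SB.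
  by apply: ub_le_sup; [exists (e `^ eta) | exists (t / 2)].
have z0 : normLpW O p G t = 0.
  apply: (superlinear_bound_eq0 (Y := sup SY) (K := c0 * sup SB)
    (Z := normLpW O p G T) (p := p) (m := m)).
  - by rewrite p_gt0 pm.
  - exact: le_trans (powR_ge0 _ _) (SY_ge _ mid_in).
  - by apply: mulr_ge0; [exact: ltW | exact: le_trans (powR_ge0 _ _) SB_ge].
  - by rewrite powR_ge0 /=; apply: normLpW_le (ltW p_gt0) tT GT.
  - apply: le_lt_trans small; apply: ler_wpM2r; first exact: powR_ge0.
    apply: ler_wpM2l; first exact: ltW.
    by apply: ge_sup => //; exists (L (t / 2) `^ eta); exists (t / 2).
  - exact: energy.
move=> s st; apply: (@powR_eq0_eq0 _ _ sigma); apply/eqP.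
rewrite eq_le powR_ge0 andbT (le_trans (SY_ge _ st)) //.
have := energy tT'; rewrite z0 powR0 ?gt_eqF // powR0 ?gt_eqF ?(lt_le_trans p_gt0 pm) //.
by rewrite mulr0 addr0.
Qed.

Lemma Lnorm_extend t0 : 0 <= t0 < T -> (forall s, 0 <= s <= t0 -> L s = 0) ->
  exists2 t', t0 < t' & forall s, t0 < s < t' -> L s = 0.
Proof.
move=> /andP[t00 t0T] Lupto.
set Z := normLpW O p G T `^ (m - p).
have Z1 : 0 < Z + 1 := ltr_wpDl (powR_ge0 _ _) ltr01.
have cZ0 : 0 < c0 * (Z + 1) by rewrite mulr_gt0.
(* Chosen so that c0 * e ^ eta * Z = Z / (Z + 1) < 1. *)
pose e := (c0 * (Z + 1))^-1 `^ eta^-1.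
have e0 : 0 < e by apply: powR_gt0; rewrite invr_gt0.
have small : c0 * e `^ eta * Z < 1.
  rewrite -powRrM mulVf ?gt_eqF // powRr1 ?invr_ge0 ?(ltW cZ0) //.
  by rewrite invfM mulrA divff ?gt_eqF // mul1r mulrC ltr_pdivrMr // mul1r ltrDl.
have t0T' : 0 <= t0 <= T by rewrite t00 ltW.
have Lt0 : L t0 = 0 by apply: Lupto; rewrite t00 lexx.
have [d d0 near_t0] := Lnorm_near_zero t0T' Lt0 e0.
set t' := Num.min T (t0 + d / 2).
have t0t' : t0 < t' by rewrite lt_min t0T ltrDl divr_gt0.
have t'T : 0 < t' <= T by rewrite ge_min lexx (le_lt_trans t00 t0t').
have t'd : t' < t0 + d.
  apply: le_lt_trans (_ : t' <= t0 + d / 2) _; first by rewrite ge_min lexx orbT.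
  by rewrite ltrD2l ltr_pdivrMr // ltr_pMr // ltr1n.
exists t'; first exact: t0t'.
move=> s /andP[t0s st'].
apply: (energy_vanish t'T (ltW e0) small) => [r /andP[r0 rt']|]; last first.
  by rewrite (le_lt_trans t00 t0s).
have [rt0|t0r] := leP r t0; first by rewrite Lupto ?(ltW r0) ?rt0 ?(ltW e0).
apply: near_t0; first by rewrite (ltW r0) (le_trans (ltW rt')) // (andP t'T).2.
by rewrite gtr0_norm ?subr_gt0 // ltrBlDl (lt_trans rt' t'd).
Qed.

End EnergyUniqueness.

Theorem lemma3p3 (R : realType) (N : nat) (O : set 'rV[R]_N)
  (T p sigma c0 eta m : R)
  (w : R -> 'rV[R]_N -> R) (G : R -> 'rV[R]_N -> 'rV[R]_N) :
  (0 < N)%N -> open O -> bounded_set O ->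
  0 < T -> 1 < p -> 1 <= sigma ->
  inLpW10 O T p w G -> inCL O T sigma w ->
  Lnorm_O sigma O (w 0) = 0 ->
  0 < c0 -> 0 < eta -> p <= m ->
  (forall t, 0 <= t <= T ->
     sup [set Lnorm_O sigma O (w s) `^ sigma | s in [set s | 0 < s < t]]
       + normLpW O p G t `^ p
     <= c0 * sup [set Lnorm_O sigma O (w s) `^ eta | s in [set s | 0 < s < t]]
          * normLpW O p G t `^ m) ->
  forall t, 0 <= t <= T -> Lnorm_O sigma O (w t) = 0.
Proof.
move=> _ oO _ T0 p1 s1 [_ _ _ GT] wC w0 c0_gt0 eta_gt0 pm energy.
have sigma_gt0 : 0 < sigma := lt_le_trans ltr01 s1.
have p_gt0 : 0 < p := lt_trans ltr01 p1.
apply: real_induction (ltW T0) w0 _ _ => t.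
  exact: Lnorm_left_closed oO sigma_gt0 wC t.
exact: Lnorm_extend oO sigma_gt0 wC p_gt0 pm c0_gt0 eta_gt0 GT energy t.
Qed.
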